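(* Let $G\in\mathcal{C}$, $N\unlhd G$, and let $(H,H,\vartheta)\in\mathcal{L}_N$ be good. Then for every $(H',H',\vartheta')\in\mathcal{L}_N$ with $(H',H',\vartheta')\neq(H,H,\vartheta)$, the Shoda pairs $(H,\ker\vartheta)$ and $(H',\ker\vartheta')$ do not realize the same primitive central idempotent of $\mathbb{Q}G$.
   Context: All groups are finite. $\mathcal{C}$ is the class of finite groups $G$ such that every subgroup and quotient group of $G$ is either abelian or contains a non-central abelian normal subgroup. $\psi^x(g)=\psi(xgx^{-1})$, $\psi^G$ induced character, $1_N$ trivial character. A Shoda pair of $G$ is $(H,K)$ with $K\unlhd H\le G$, $H/K$ cyclic, and $g\in G$, $[H,g]\cap H\subseteq K$ imply $g\in H$; it realizes the primitive central idempotent $e_{\mathbb{Q}}(\psi^G)$ where $\psi$ is linear on $H$ with kernel $K$ and $e_{\mathbb{Q}}(\chi)=\frac{\chi(1)}{|G|}\sum_{\sigma\in\operatorname{Gal}(\mathbb{Q}(\chi)/\mathbb{Q})}\sum_{g\in G}\sigma(\chi(g))g^{-1}$. An $N$-linear character triple of $G$ is $(H,A,\vartheta)$ with $H\le G$, $A\unlhd H$, $\vartheta$ a linear character of $A$ invariant in $H$, and $\ker(\vartheta^G)=N$. For $B\unlhd M\le G$ and linear $\lambda$ on $B$, $\widetilde{\operatorname{Lin}}(M|\lambda)$ is the set of linear characters of $M$ whose restriction to $B$ contains $\lambda$ and whose induction to $G$ has kernel $N$. For each triple a normal subgroup $\mathcal{A}=\mathcal{A}_{(H,A,\vartheta)}$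 of $H$ is fixed, of maximal order among normal subgroups of $H$ containing $\ker\vartheta$ with abelian quotient by $\ker\vartheta$. $\operatorname{Aut}(\mathbb{C}|\vartheta)\times H$ acts on $\widetilde{\operatorname{Lin}}(\mathcal{A}|\vartheta)$ by $(\sigma,h)\cdot\varphi=\sigma\circ\varphi^h$ ($\sigma$ a field automorphism of $\mathbb{C}$ fixing $\mathbb{Q}(\vartheta)$); fix orbit representatives $\mathfrak{Lin}(\mathcal{A}|\vartheta)$. If $H\neq A$, $Cl(H,A,\vartheta)=\{(I_H(\varphi),\mathcal{A},\varphi):\varphi\in\mathfrak{Lin}(\mathcal{A}|\vartheta)\}$, $I_H(\varphi)=\{h\in H:\varphi^h=\varphi\}$; if $H=A$, empty. $\mathcal{G}_N$: directed graph of $N$-linear triples reachable from $(G,N,1_N)$, edges $(u,v)$ whenever $v\in Cl(u)$; each vertex is reached by a unique directed path from the root. $\mathcal{L}_N$: vertices of the form $(H,H,\vartheta)$. For such a leaf with path $v_1=(G,N,1_N),\dots,v_n=(H,H,\vartheta)$, $n$ is its height and $v_i=(H_i,A_i,\vartheta_i)$ its $i$-th node; the leaf is good if for every $1<i\le n$ and $x\in N_{H_{i-1}}(\ker\vartheta_i)$ there is a field automorphism $\sigma$ of $\mathbb{C}$ with $(\vartheta^{H_i})^x=\sigma\circ\vartheta^{H_i}$. *)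

From HB Require Import structures.
From mathcomp Require Import all_boot all_order all_algebra all_fingroup all_solvable all_field all_character.
Unset Implicit Arguments.
Unset Strict Implicit.
Unset Printing Implicit Defensive.
Import GRing.Theory Num.Theory.
Local Open Scope ring_scope.
Local Open Scope group_scope.

Section Defs.
Variable gT : finGroupType.

Definition class_C (G : {group gT}) : Prop :=
  (forall H : {group gT}, H \subset G ->
     abelian H \/
     exists A : {group gT}, [/\ A <| H, abelian A & ~~ (A \subset 'Z(H))]) /\
  (forall M : {group gT}, M <| G ->
     abelian (G / M) \/
     exists A : {group coset_of M},
       [/\ A <| G / M, abelian A & ~~ (A \subset 'Z(G / M))]).

Record triple := Triple { tH : {group gT}; tA : {group gT}; tth : 'CF(tA) }.

Variables (G N : {group gT}).

Definition nlinear (u : triple) : Prop :=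
  [/\ tH u \subset G, tA u <| tH u, tth u \is a linear_char,
      {in tH u, forall h, (tth u ^ h)%CF = tth u}
    & cfker ('Ind[G] (tth u)) = N].

Definition A_spec (Af : triple -> {group gT}) : Prop :=
  forall u, nlinear u ->
    [/\ Af u <| tH u, cfker (tth u) \subset Af u,
        abelian (Af u / cfker (tth u))
      & forall M : {group gT}, M <| tH u -> cfker (tth u) \subset M ->
          abelian (M / cfker (tth u)) -> #|M| <= #|Af u| ]%N.

Variable Af : triple -> {group gT}.

Definition linTilde (u : triple) (phi : 'CF(Af u)) : Prop :=
  [/\ phi \is a linear_char, '['Res[tA u] phi, tth u] != 0
    & cfker ('Ind[G] phi) = N].

Definition same_orbit (u : triple) (phi psi : 'CF(Af u)) : Prop :=
  exists sigma : {rmorphism algC -> algC},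
    (forall a, sigma (tth u a) = tth u a) /\
    exists2 h, h \in tH u & psi = cfAut sigma (phi ^ h)%CF.

Definition reps_spec (reps : forall u : triple, pred 'CF(Af u)) : Prop :=
  forall u, nlinear u ->
    (forall phi, reps u phi -> linTilde u phi) /\
    (forall phi, linTilde u phi -> exists! psi, reps u psi /\ same_orbit u psi phi).

Variable reps : forall u : triple, pred 'CF(Af u).

Definition edge (u v : triple) : Prop :=
  tH u != tA u /\
  exists phi : 'CF(Af u),
    reps u phi /\ v = @Triple ('I_(tH u)[phi])%G (Af u) phi.

Definition root : triple := @Triple G N 1.

Definition is_path (p : seq triple) : Prop :=
  [/\ (0 < size p)%N, head root p = root,
      (forall i, (i < size p)%N -> nlinear (nth root p i))
    & forall i, (i.+1 < size p)%N -> edge (nth root p i) (nth root p i.+1)].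

Definition in_LN (u : triple) : Prop :=
  (exists p, is_path p /\ last root p = u) /\ tA u = tH u.

Definition good_leaf (u : triple) : Prop :=
  tA u = tH u /\
  exists p, [/\ is_path p, last root p = u &
    forall i, (0 < i < size p)%N ->
      forall x, x \in 'N_(tH (nth root p i.-1))(cfker (tth (nth root p i))) ->
        exists sigma : {rmorphism algC -> algC}, forall g,
          ('Ind[tH (nth root p i)] (tth u)) (g ^ x^-1) =
          sigma (('Ind[tH (nth root p i)] (tth u)) g)].

End Defs.

Section Idem.
Variables (gT : finGroupType) (G : {group gT}).

(* s is a set of representatives of Gal(Q(chi)/Q): each automorphism of C
   (restricted to algC) agrees on Q(chi) (generated by the values of chi)
   with exactly one element of s. *)
Definition gal_reps (chi : 'CF(G)) (s : seq {rmorphism algC -> algC}) : Prop :=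
  forall sigma : {rmorphism algC -> algC},
    count (fun tau : {rmorphism algC -> algC} =>
             [forall g, tau (chi g) == sigma (chi g)]) s = 1%N.

(* coefficient function of e_Q(chi) = chi(1)/|G| sum_sigma sum_g sigma(chi g) g^-1 *)
Definition eQ_coef (chi : 'CF(G)) (s : seq {rmorphism algC -> algC}) : gT -> algC :=
  fun g => if g \in G then
             (chi 1%g / #|G|%:R * \sum_(tau <- s) tau (chi (g^-1)%g))%R
           else 0.

Definition realizes (H : {group gT}) (K : {set gT}) (e : gT -> algC) : Prop :=
  exists psi : 'CF(H),
    [/\ psi \is a linear_char, cfker psi = K &
        exists s, gal_reps ('Ind[G] psi) s /\ {in G, e =1 eQ_coef ('Ind[G] psi) s}].

End Idem.

Arguments class_C {gT} G.
Arguments tH {gT} t.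
Arguments tA {gT} t.
Arguments tth {gT} t.
Arguments Triple {gT} tH tA tth.
Arguments nlinear {gT} G N u.
Arguments A_spec {gT} G N Af.
Arguments linTilde {gT} G N Af u phi.
Arguments same_orbit {gT} Af u phi psi.
Arguments reps_spec {gT} G N Af reps.
Arguments edge {gT} Af reps u v.
Arguments root {gT} G N.
Arguments is_path {gT} G N Af reps p.
Arguments in_LN {gT} G N Af reps u.
Arguments good_leaf {gT} G N Af reps u.
Arguments gal_reps {gT} G chi s.
Arguments eQ_coef {gT} G chi s g.
Arguments realizes {gT} G H K e.

(* Suppose (H, ker θ) and (H', ker θ') realize the same idempotent. A linear character
   is determined by its kernel up to Galois conjugacy, and e_Q(χ) determines the
   irreducible χ up to Galois conjugacy, so θ^G and θ'^G are Galois conjugate.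
   Walk down the two paths of G_N from the root simultaneously, keeping θ^{H_i} and
   θ'^{H_i} Galois conjugate, say by τ. By Clifford's theorem τ fixes the invariant
   θ_i, and τ maps the constituent φ ∈ Lin(A|θ_i) under θ^{H_i} to an H_i-conjugate
   of the one under θ'^{H_i}; as the representatives are taken modulo
   Aut(C|θ_i) × H_i, both paths take the same edge. Goodness of the leaf carries the
   Galois conjugacy down to the inertia group I_{H_i}(φ), by injectivity of the
   Clifford correspondence. Leaves occur only at the ends of paths, so both paths
   end at the same leaf. *)

From Pilot Require Import Defs.
From HB Require Import structures.
From mathcomp Require Import all_boot all_order all_algebra all_fingroup all_solvable all_field all_character.
From mathcomp Require Import zify.
Set Implicit Arguments.
Unset Strict Implicit.
Unset Printing Implicit Defensive.
Import Order.TTheory GRing.Theory Num.Theory.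
Local Open Scope ring_scope.

Definition gal_conj (gT : finGroupType) (H : {group gT}) (phi psi : 'CF(H)) : Prop :=
  exists tau : {rmorphism algC -> algC}, psi = cfAut tau phi.

Section GaloisConjugate.
Variables (gT : finGroupType) (H : {group gT}).
Implicit Types phi psi chi : 'CF(H).

Lemma gal_conj_trans phi psi chi :
  gal_conj phi psi -> gal_conj psi chi -> gal_conj phi chi.
Proof.
move=> [t1 ->] [t2 ->]; exists (t2 \o t1 : {rmorphism algC -> algC}).
by apply/cfunP => x; rewrite !cfunE.
Qed.

Lemma gal_conj_irr phi psi : gal_conj phi psi -> (psi \in irr H) = (phi \in irr H).
Proof. by case=> tau ->; rewrite cfAut_irr. Qed.

Lemma gal_conj_Ind (G : {group gT}) phi psi :
  gal_conj phi psi -> gal_conj ('Ind[G] phi) ('Ind[G] psi).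
Proof. by move=> [tau ->]; exists tau; rewrite cfAutInd. Qed.

End GaloisConjugate.

Lemma sumr_neq0_exists (V : nmodType) (I : Type) (r : seq I) (F : I -> V) :
  \sum_(i <- r) F i != 0 -> exists i, F i != 0.
Proof.
elim: r => [|i r IHr]; first by rewrite big_nil eqxx.
by rewrite big_cons; have [-> | ] := eqVneq (F i) 0; [rewrite add0r | exists i].
Qed.

Section Idempotents.
Variables (gT : finGroupType) (G : {group gT}).

Lemma sum_eQ_coef_mul (chi chi' : 'CF(G)) s : chi \is a character ->
  \sum_(g in G) eQ_coef G chi s g * chi' g =
  chi 1%g * \sum_(tau <- s) '[chi', cfAut tau chi].
Proof.
move=> Nchi; have dotE tau :
    '[chi', cfAut tau chi] = #|G|%:R^-1 * \sum_(x in G) chi' x * tau (chi x^-1)%g.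
  rewrite cfdotE; congr (_ * _); apply: eq_bigr => x _.
  have := char_inv x^-1%g (etrans (cfAut_char tau chi) Nchi).
  by rewrite invgK !cfunE => ->; rewrite conjCK.
under [in RHS]eq_bigr do rewrite dotE.
rewrite -big_distrr /= mulrA exchange_big /= big_distrr /=.
apply: eq_bigr => x Gx; rewrite /eQ_coef Gx -mulrA !big_distrl /= big_distrr /=.
rewrite [RHS]big_distrr; apply: eq_bigr => tau _; by rewrite (mulrC (tau _)).
Qed.

Lemma gal_reps_cfdot_sum_gt0 (chi : 'CF(G)) s : chi \in irr G -> gal_reps G chi s ->
  0 < \sum_(tau <- s) '[chi, cfAut tau chi].
Proof.
move=> irr_chi gal; pose id_on_chi (t : {rmorphism algC -> algC}) :=
  [forall g, t (chi g) == (idfun : {rmorphism algC -> algC}) (chi g)].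
rewrite (bigID id_on_chi) /=.
have -> : \sum_(t <- s | id_on_chi t) '[chi, cfAut t chi] = 1.
  rewrite (eq_bigr (fun _ => 1)) => [|t /forallP tE]; last first.
    have -> : cfAut t chi = chi by apply/cfunP => g; rewrite cfunE (eqP (tE g)).
    exact: irrWnorm.
  by rewrite big_const_seq (gal idfun) /= addr0.
rewrite ltr_wpDr ?ltr01 ?sumr_ge0 // => tau _.
by rewrite natr_ge0 // Cnat_cfdot_char ?cfAut_char ?irrWchar.
Qed.

(* Pair both coefficient functions with [chi']: the right-hand pairing is positive,
   so some Galois conjugate of [chi] on the left is not orthogonal to [chi']. *)
Lemma eq_eQ_coef_gal_conj (chi chi' : 'CF(G)) s s' :
  chi \in irr G -> chi' \in irr G -> gal_reps G chi' s' ->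
  {in G, eQ_coef G chi s =1 eQ_coef G chi' s'} -> gal_conj chi chi'.
Proof.
move=> irr_chi irr_chi' gal' eqE.
have sum_eq : chi 1%g * \sum_(tau <- s) '[chi', cfAut tau chi] =
              chi' 1%g * \sum_(tau <- s') '[chi', cfAut tau chi'].
  rewrite -!sum_eQ_coef_mul ?irrWchar //.
  by apply: eq_bigr => g Gg; rewrite eqE.
have : chi 1%g * \sum_(tau <- s) '[chi', cfAut tau chi] != 0.
  rewrite sum_eq lt0r_neq0 // mulr_gt0 ?gal_reps_cfdot_sum_gt0 //.
  by have /irrP[i ->] := irr_chi'; apply: irr1_gt0.
rewrite mulf_eq0 negb_or => /andP[_ /sumr_neq0_exists[tau nz0]]; exists tau.
have /irrP[i Di] := irr_chi'; have /irrP[j Dj] : cfAut tau chi \in irr G.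
  by rewrite cfAut_irr.
by move: nz0; rewrite Di Dj cfdot_irr pnatr_eq0 eqb0 negbK => /eqP ->.
Qed.

End Idempotents.

Section LinearCharacters.
Variables (gT : finGroupType) (H : {group gT}).

Lemma lin_char_cfker_eq1 (lam : 'CF(H)) x : lam \is a linear_char -> x \in H ->
  (x \in cfker lam) = (lam x == 1).
Proof. by move=> Llam Hx; rewrite cfkerEchar ?lin_charW // inE Hx lin_char1. Qed.

(* Both characters factor through the cyclic group [H / K]; on a generator they
   take primitive roots of unity of the same order, which a Galois automorphism
   of a cyclotomic field exchanges. *)
Lemma lin_char_gal_conj (lam mu : 'CF(H)) :
  lam \is a linear_char -> mu \is a linear_char -> cfker lam = cfker mu ->
  gal_conj lam mu.
Proof.
move=> Llam Lmu eq_ker; set K := cfker lam.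
have nsKH : (K <| H)%g := cfker_normal lam.
have ZlamH : ('Z(lam))%CF = H.
  apply/eqP; rewrite eqEsubset cfcenter_sub; apply/subsetP=> x Hx.
  by rewrite char_cfcenterE ?lin_charW // normC_lin_char // lin_char1.
have /cyclicP[xb defHK] : cyclic (H / K)%g by rewrite -{1}ZlamH cfcenter_cyclic.
have /morphimP[g Ng Hg defxb] : xb \in (H / K)%g by rewrite defHK cycle_id.
have powE h : h \in H -> exists2 j, lam h = lam g ^+ j & mu h = mu g ^+ j.
  move=> Hh; have : coset K h \in <[xb]>%g by rewrite -defHK mem_quotient.
  case/cycleP=> j; rewrite defxb -morphX //= => Dh; exists j.
    by rewrite -lin_charX // -(cfQuoE nsKH) ?groupX // Dh cfQuoE ?groupX.
  by rewrite -lin_charX // -(cfQuoE nsKH) ?groupX -?eq_ker // Dh cfQuoE ?groupX -?eq_ker.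
have unity_orderE n : (lam g ^+ n == 1) = (mu g ^+ n == 1).
  have Hgn := groupX n Hg; rewrite -!lin_charX //.
  by rewrite -(lin_char_cfker_eq1 Llam Hgn) -(lin_char_cfker_eq1 Lmu Hgn) eq_ker.
have [d prim_lam _] := prim_order_exists (order_gt0 g) (lin_char_unity_root Llam Hg).
have [d' prim_mu _] := prim_order_exists (order_gt0 g) (lin_char_unity_root Lmu Hg).
have eq_dd' : d = d'.
  apply/eqP; rewrite eqn_dvd (prim_order_dvd prim_lam) (prim_order_dvd prim_mu).
  rewrite unity_orderE (prim_expr_order prim_mu) -unity_orderE.
  by rewrite (prim_expr_order prim_lam) eqxx.
subst d'; have [[k _] /= Dmu] := prim_rootP prim_lam (prim_expr_order prim_mu).
have [tau tauE] :
    {tau : {rmorphism algC -> algC} | forall z, z ^+ d = 1 -> tau z = z ^+ k}.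
  by apply: Qn_aut_exists; rewrite -(prim_root_exp_coprime k prim_lam) -Dmu.
exists tau; apply/cfun_inP => h Hh; rewrite cfunE.
have [j -> ->] := powE h Hh.
by rewrite rmorphXn tauE ?(prim_expr_order prim_lam) // Dmu.
Qed.

End LinearCharacters.

Lemma realizes_gal_conj (gT : finGroupType) (G H H' : {group gT})
    (th : 'CF(H)) (th' : 'CF(H')) (e : gT -> algC) :
  th \is a linear_char -> th' \is a linear_char ->
  'Ind[G] th \in irr G -> 'Ind[G] th' \in irr G ->
  realizes G H (cfker th) e -> realizes G H' (cfker th') e ->
  gal_conj ('Ind[G] th) ('Ind[G] th').
Proof.
move=> Lth Lth' irr_th irr_th' [psi [Lpsi ker_psi [s [_ eE]]]].
case=> psi' [Lpsi' ker_psi' [s' [gal' eE']]].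
have /(gal_conj_Ind G) th_psi := lin_char_gal_conj Lth Lpsi (esym ker_psi).
have /(gal_conj_Ind G) psi_th' := lin_char_gal_conj Lpsi' Lth' ker_psi'.
apply: (gal_conj_trans th_psi (gal_conj_trans _ psi_th')).
apply: eq_eQ_coef_gal_conj gal' _ => [||g Gg]; last by rewrite -eE' // eE.
  by rewrite (gal_conj_irr th_psi).
by rewrite -(gal_conj_irr psi_th').
Qed.

Section Clifford.
Variable gT : finGroupType.

Lemma cfdot_Res_trans_neq0 (B A H : {group gT}) (chi : 'CF(H)) (phi : 'CF(A))
    (th : 'CF(B)) :
  B \subset A -> A \subset H -> chi \is a character -> phi \in irr A ->
  th \in irr B -> '['Res[A] chi, phi] != 0 -> '['Res[B] phi, th] != 0 ->
  '['Res[B] chi, th] != 0.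
Proof.
move=> sBA sAH Nchi /irrP[j ->] /irrP[q ->] chi_j j_q.
rewrite -irr_consttE -(cfResRes _ sBA sAH).
by apply: (constt_Res_trans (j := j)); rewrite ?cfRes_char ?irr_consttE.
Qed.

Lemma cfdot_Res_Ind_neq0 (A I H : {group gT}) (al : 'CF(I)) (phi : 'CF(A)) :
  A \subset I -> I \subset H -> al \in irr I -> phi \in irr A ->
  '['Res[A] al, phi] != 0 -> '['Res[A] ('Ind[H] al), phi] != 0.
Proof.
move=> sAI sIH irr_al irr_phi; apply: (cfdot_Res_trans_neq0 sAI sIH _ irr_al irr_phi).
  by rewrite cfInd_char ?irrWchar.
rewrite cfdot_Res_l cfnorm_eq0 cfInd_eq0 ?irrWchar //.
by case/irrP: irr_al => i ->; apply: irr_neq0.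
Qed.

Lemma cfclass_Res_constt (A H : {group gT}) (chi : 'CF(H)) (phi psi : 'CF(A)) :
  (A <| H)%g -> chi \in irr H -> phi \in irr A -> psi \in irr A ->
  '['Res[A] chi, phi] != 0 -> '['Res[A] chi, psi] != 0 -> psi \in (phi ^: H)%CF.
Proof.
move=> nsAH /irrP[i ->] /irrP[j ->] /irrP[k ->] chi_j; apply: contraR => k_notin.
rewrite (Clifford_Res_sum_cfclass nsAH (j := j)) ?irr_consttE // cfdotZl cfdot_suml.
rewrite big1_seq ?mulr0 ?eqxx // => xi /andP[_ /[dup] xi_in /cfclassP[y Hy Dxi]].
rewrite Dxi -conjg_IirrE cfdot_irr; case: eqP => // eq_k.
by case/negP: k_notin; rewrite -eq_k conjg_IirrE -Dxi.
Qed.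

Lemma cfAut_cfclass_Res_constt (A H : {group gT}) (chi : 'CF(H)) (phi phi' : 'CF(A))
    (tau : {rmorphism algC -> algC}) :
  (A <| H)%g -> chi \in irr H -> phi \in irr A -> phi' \in irr A ->
  '['Res[A] chi, phi] != 0 -> '['Res[A] (cfAut tau chi), phi'] != 0 ->
  cfAut tau phi \in (phi' ^: H)%CF.
Proof.
move=> nsAH irr_chi irr_phi irr_phi' chi_phi chi_phi'.
apply: (cfclass_Res_constt (chi := cfAut tau chi) nsAH _ irr_phi'); rewrite ?cfAut_irr //.
by rewrite -cfAutRes cfdot_aut_char ?irrWchar // fmorph_eq0.
Qed.

Section CliffordCorrespondence.
Variables (M H I : {group gT}) (phi : 'CF(M)).
Hypotheses (nsMH : (M <| H)%g) (irr_phi : phi \in irr M) (defI : 'I_H[phi]%g = I).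

Lemma Inertia_Ind_irr (al : 'CF(I)) :
  al \in irr I -> '['Res[M] al, phi] != 0 -> 'Ind[H] al \in irr H.
Proof.
have eqI : 'I_H[phi]%G = I by apply: val_inj.
case: I / eqI al => _ /irrP[s ->]; have /irrP[t Dphi] := irr_phi; subst phi.
have [irr_Ind _ _ _ _] := constt_Inertia_bijection t nsMH.
by move=> t_s; apply: irr_Ind; rewrite constt_Ind_Res irr_consttE.
Qed.

Lemma Inertia_Ind_inj (al be : 'CF(I)) :
  al \in irr I -> be \in irr I ->
  '['Res[M] al, phi] != 0 -> '['Res[M] be, phi] != 0 ->
  'Ind[H] al = 'Ind[H] be -> al = be.
Proof.
have eqI : 'I_H[phi]%G = I by apply: val_inj.
case: I / eqI al be => _ _ /irrP[r ->] /irrP[s ->].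
have /irrP[t Dphi] := irr_phi; subst phi.
have [_ inj_Ind _ _ _] := constt_Inertia_bijection t nsMH.
move=> t_r t_s eq_Ind; congr 'chi_(_); apply: inj_Ind; last by rewrite /Ind_Iirr eq_Ind.
  by rewrite constt_Ind_Res irr_consttE.
by rewrite constt_Ind_Res irr_consttE.
Qed.
End CliffordCorrespondence.
End Clifford.

Lemma commg_sub_cfker_lin_char (gT : finGroupType) (A B : {group gT}) (th : 'CF(A)) :
  th \is a linear_char -> (B \subset 'N(A))%g -> {in B, forall b, (th ^ b)%CF = th} ->
  ([~: A, B] \subset cfker th)%g.
Proof.
move=> Lth nAB inv; rewrite gen_subG; apply/subsetP => _ /imset2P[a b Aa Bb ->].
have Aab : (a ^ b \in A)%g by rewrite memJ_norm ?(subsetP nAB).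
have Acomm : (a^-1 * a ^ b \in A)%g by rewrite groupM ?groupV.
rewrite commgEl (lin_char_cfker_eq1 Lth Acomm) lin_charM ?groupV //.
by rewrite -{2}(inv b Bb) cfConjgEJ ?(subsetP nAB) // -lin_charM ?groupV // mulVg lin_char1.
Qed.

Lemma ltn_ind_down (P : nat -> Prop) n :
  P n.-1 -> (forall i, i.+1 < n -> P i.+1 -> P i)%N -> forall i, (i < n)%N -> P i.
Proof.
move=> Plast Pstep i lt_in; move Dk: (n.-1 - i)%N => k.
elim: k i lt_in Dk => [|k IHk] i lt_in Dk; first by have -> : i = n.-1 by lia.
by apply: Pstep; [lia | apply: IHk; lia].
Qed.

Definition Ind_irr_over (gT : finGroupType) (v : triple gT) (L : {group gT}) (th : 'CF(L)) :=
  [/\ (L \subset tH v)%g, 'Ind[tH v] th \in irr (tH v)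
    & '['Res[tA v] ('Ind[tH v] th), tth v] != 0].
Arguments Ind_irr_over {gT} v L th.

Definition good_step (gT : finGroupType) (v w : triple gT) (L : {group gT})
    (th : 'CF(L)) :=
  forall x, (x \in 'N_(tH v)(cfker (tth w)))%g ->
    exists sigma : {rmorphism algC -> algC}, forall g,
      ('Ind[tH w] th) (g ^ x^-1)%g = sigma (('Ind[tH w] th) g).
Arguments good_step {gT} v w L th.

Section CliffordTree.
Variables (gT : finGroupType) (G N : {group gT}) (Af : triple gT -> {group gT})
  (reps : forall u : triple gT, pred 'CF(Af u)).
Hypotheses (hA : A_spec G N Af) (hR : reps_spec G N Af reps).
Arguments reps : clear implicits.

Local Notation root := (Defs.root G N).
Local Notation child v phi := (Triple ('I_(tH v)[phi])%G (Af v) phi).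

(* [Af u <*> tA u] still has abelian image modulo [cfker (tth u)], as [tth u] is
   linear and [tH u]-invariant; maximality of [Af u] then forces equality. *)
Lemma tA_sub_Af u : nlinear G N u -> (tA u \subset Af u)%g.
Proof.
move=> nlu; have [nsMH sKM abM maxM] := hA nlu; case: nlu => _ nsAH Lth inv _.
have nAH := normal_norm nsAH; set K := cfker (tth u).
have nKH : (tH u \subset 'N(K))%g.
  by apply/subsetP => h Hh; apply/normP; rewrite -cfker_conjg ?(subsetP nAH) ?inv.
have abMA : abelian ((Af u <*> tA u) / K)%g.
  rewrite quotientY ?(subset_trans (normal_sub nsMH) nKH)
    ?(subset_trans (normal_sub nsAH) nKH) // abelianY abM.
  rewrite sub_der1_abelian ?lin_char_der1 //= quotient_cents2r //.
  apply: commg_sub_cfker_lin_char (subset_trans (normal_sub nsMH) nAH) _ => // m Mm.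
  by rewrite inv // (subsetP (normal_sub nsMH)).
have le_MA := maxM _ (normalY nsMH nsAH) (subset_trans sKM (joing_subl _ _)) abMA.
have /eqP-> : Af u :==: (Af u <*> tA u)%g by rewrite eqEcard joing_subl.
exact: joing_subr.
Qed.

Lemma Ind_irr_over_child v phi (L : {group gT}) (th : 'CF(L)) :
  nlinear G N v -> reps v phi -> Ind_irr_over (child v phi) L th ->
  Ind_irr_over v L th /\ '['Res[Af v] ('Ind[tH v] th), phi] != 0.
Proof.
move=> nlv rphi [/= sLI irr_I I_phi]; have [nsMH _ _ _] := hA nlv.
have [Lphi phi_th _] := (hR nlv).1 phi rphi; have irr_phi := lin_char_irr Lphi.
have sIH : ('I_(tH v)[phi] \subset tH v)%g := Inertia_sub _ _.
have sMI : (Af v \subset 'I_(tH v)[phi])%g := sub_Inertia _ (normal_sub nsMH).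
have IndIE : 'Ind[tH v] th = 'Ind[tH v] ('Ind['I_(tH v)[phi]] th) by rewrite cfIndInd.
have H_phi : '['Res[Af v] ('Ind[tH v] th), phi] != 0.
  by rewrite IndIE; apply: cfdot_Res_Ind_neq0.
split=> //; split; first exact: subset_trans sLI sIH.
  by rewrite IndIE; apply: (Inertia_Ind_irr nsMH irr_phi erefl irr_I I_phi).
have [_ _ Lth _ _] := nlv.
apply: (cfdot_Res_trans_neq0 (tA_sub_Af nlv) (normal_sub nsMH) _ irr_phi) => //.
- by rewrite IndIE cfInd_char ?irrWchar.
- exact: lin_char_irr.
Qed.

Lemma path_last_nlinear p : is_path G N Af reps p -> nlinear G N (last root p).
Proof. by case=> p_gt0 _ nlp _; rewrite -nth_last; apply: nlp; rewrite prednK. Qed.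

Lemma leaf_Ind_irr_over p u :
  is_path G N Af reps p -> last root p = u -> tA u = tH u ->
  forall i, (i < size p)%N -> Ind_irr_over (nth root p i) (tA u) (tth u).
Proof.
move=> pathp lastp leaf_u; have [p_gt0 _ nlp edges] := pathp.
apply: ltn_ind_down => [|i lt_i1 over_i1].
  have [_ _ Lth _ _] := path_last_nlinear pathp.
  rewrite nth_last lastp in Lth *; rewrite /Ind_irr_over -leaf_u cfInd_id cfRes_id.
  by split; rewrite ?lin_char_irr ?irrWnorm ?lin_char_irr ?oner_eq0.
have [_ [phi [rphi Dw]]] := edges i lt_i1; rewrite Dw in over_i1.
exact: (Ind_irr_over_child (nlp i (ltnW lt_i1)) rphi over_i1).1.
Qed.

Lemma path_leaf_last p i :
  is_path G N Af reps p -> (i < size p)%N -> tA (nth root p i) = tH (nth root p i) ->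
  i = (size p).-1.
Proof.
case=> _ _ _ edges lt_ip leaf_i; have [lt_i1 | ] := ltnP i.+1 (size p); last by lia.
by have [] := edges i lt_i1; rewrite leaf_i eqxx.
Qed.

Lemma eq_last_leaf_paths p p' :
  is_path G N Af reps p -> is_path G N Af reps p' ->
  tA (last root p) = tH (last root p) -> tA (last root p') = tH (last root p') ->
  (forall k, k < size p -> k < size p' -> nth root p k = nth root p' k)%N ->
  last root p = last root p'.
Proof.
wlog le_pp' : p p' / (size p <= size p')%N => [WLOG | pathp pathp' leaf leaf' eq_nth].
  move=> pathp pathp' leaf leaf' eq_nth; have [le | /ltnW le] := leqP (size p) (size p').
    exact: WLOG.
  by symmetry; apply: WLOG => // k lt' lt; rewrite eq_nth.
have [p_gt0 _ _ _] := pathp; have lt_k : ((size p).-1 < size p)%N by rewrite prednK.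
have lt_k' : ((size p).-1 < size p')%N by lia.
have Ek := eq_nth _ lt_k lt_k'; rewrite nth_last in Ek.
have := path_leaf_last pathp' lt_k'; rewrite -Ek => /(_ leaf) Dk.
by rewrite Ek Dk nth_last.
Qed.

Lemma reps_same_orbit_eq v (phi phi' : 'CF(Af v)) :
  nlinear G N v -> reps v phi -> reps v phi' -> same_orbit Af v phi phi' -> phi = phi'.
Proof.
move=> nlv rphi rphi' orb; have [reps_lin reps_uniq] := hR nlv.
have orb' : same_orbit Af v phi' phi'.
  exists idfun; split=> //; exists 1%g => //.
  by apply/cfunP => g; rewrite cfConjgJ1 cfunE.
have [psi [_ Upsi]] := reps_uniq phi' (reps_lin phi' rphi').
by rewrite -(Upsi phi (conj rphi orb)) (Upsi phi' (conj rphi' orb')).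
Qed.

Lemma child_eq v (phi phi' : 'CF(Af v)) (L L' : {group gT}) (th : 'CF(L)) (th' : 'CF(L'))
    (tau : {rmorphism algC -> algC}) :
  nlinear G N v -> reps v phi -> reps v phi' ->
  Ind_irr_over (child v phi) L th -> Ind_irr_over (child v phi') L' th' ->
  'Ind[tH v] th' = cfAut tau ('Ind[tH v] th) -> phi = phi'.
Proof.
move=> nlv rphi rphi' over over' Dth'.
have [[_ irr_H H_th] H_phi] := Ind_irr_over_child nlv rphi over.
have [[_ _ H_th'] H_phi'] := Ind_irr_over_child nlv rphi' over'.
have [nsMH _ _ _] := hA nlv; have [_ nsAH Lth inv _] := nlv.
have [[Lphi _ _] [Lphi' _ _]] := ((hR nlv).1 phi rphi, (hR nlv).1 phi' rphi').
have fix_th : cfAut tau (tth v) = tth v.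
  have irr_th := lin_char_irr Lth; rewrite Dth' in H_th'.
  have := cfAut_cfclass_Res_constt nsAH irr_H irr_th irr_th H_th H_th'.
  rewrite cfclass_invariant ?mem_seq1 => [/eqP // |].
  by apply/subsetP => h Hh; rewrite inE (subsetP (normal_norm nsAH)) //= inv.
rewrite Dth' in H_phi'.
have /cfclassP[x Hx Dx] := cfAut_cfclass_Res_constt nsMH irr_H (lin_char_irr Lphi)
  (lin_char_irr Lphi') H_phi H_phi'.
apply: reps_same_orbit_eq nlv rphi rphi' _; exists tau; split.
  by move=> a; rewrite -{2}fix_th cfunE.
by exists x^-1%g; rewrite ?groupV // cfAutConjg Dx cfConjgK.
Qed.

Lemma child_gal_conj v (phi : 'CF(Af v)) (L L' : {group gT}) (th : 'CF(L))
    (th' : 'CF(L')) (tau : {rmorphism algC -> algC}) :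
  nlinear G N v -> reps v phi ->
  Ind_irr_over (child v phi) L th -> Ind_irr_over (child v phi) L' th' ->
  'Ind[tH v] th' = cfAut tau ('Ind[tH v] th) -> good_step v (child v phi) L th ->
  gal_conj ('Ind['I_(tH v)[phi]] th) ('Ind['I_(tH v)[phi]] th').
Proof.
move=> nlv rphi over over' Dth' good; set I := ('I_(tH v)[phi])%G.
have [[/= sLI irr_I I_phi] [/= sL'I irr_I' I'_phi]] := (over, over').
have [[_ irr_H _] H_phi] := Ind_irr_over_child nlv rphi over.
have [_ H'_phi] := Ind_irr_over_child nlv rphi over'.
have [nsMH _ _ _] := hA nlv; have nMH := normal_norm nsMH.
have [Lphi _ _] := (hR nlv).1 phi rphi; have irr_phi := lin_char_irr Lphi.
rewrite Dth' in H'_phi.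
have /cfclassP[x Hx Dx] := cfAut_cfclass_Res_constt nsMH irr_H irr_phi irr_phi H_phi H'_phi.
have Mx := subsetP nMH x Hx; have sIH : (I \subset tH v)%g := Inertia_sub _ _.
have inertia_tau : 'I_(tH v)[cfAut tau phi]%g = I.
  by apply/setP => y; rewrite !inE -cfAutConjg (inj_eq (cfAut_inj tau)).
have nIx : (x \in 'N(I))%g.
  by apply/normP; rewrite /= conjIg conjGid // conjg_inertia // -Dx -inertia_tau.
have nKx : (x^-1 \in 'N_(tH v)(cfker phi))%g.
  by rewrite groupV inE Hx /=; apply/normP; rewrite -cfker_conjg // -Dx cfker_aut.
have [sigma conj_th] := good _ nKx.
have Dth_x : ('Ind[I] th ^ x^-1)%CF = cfAut sigma ('Ind[I] th).
  by apply/cfunP => g; rewrite cfConjgE ?groupV // cfunE conj_th.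
have Dth'_x : cfAut tau ('Ind[I] th) = ('Ind[I] th' ^ x)%CF.
  apply: (Inertia_Ind_inj nsMH _ inertia_tau); rewrite ?cfAut_irr ?cfConjg_irr //.
  - by rewrite -cfAutRes cfdot_aut_char ?lin_charW // fmorph_eq0.
  - by rewrite Dx -cfConjgRes_norm // cfConjg_iso.
  have nHx : (x \in 'N(tH v))%g := subsetP (normG _) x Hx.
  rewrite -cfAutInd cfIndInd // -Dth' -cfConjgInd_norm //.
  by rewrite cfIndInd // cfConjg_id.
exists (tau \o sigma : {rmorphism algC -> algC}).
rewrite -(cfConjgK x ('Ind[I] th')) -Dth'_x -cfAutConjg Dth_x.
by apply/cfunP => g; rewrite !cfunE.
Qed.

Lemma edge_step v w w' (L L' : {group gT}) (th : 'CF(L)) (th' : 'CF(L')) :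
  nlinear G N v -> edge Af reps v w -> edge Af reps v w' ->
  Ind_irr_over w L th -> Ind_irr_over w' L' th' ->
  gal_conj ('Ind[tH v] th) ('Ind[tH v] th') -> good_step v w L th ->
  w = w' /\ gal_conj ('Ind[tH w] th) ('Ind[tH w] th').
Proof.
move=> nlv [_ [phi [rphi ->]]] [_ [phi' [rphi' ->]]] over over' [tau Dth'] good.
have eq_phi := child_eq nlv rphi rphi' over over' Dth'; subst phi'.
by split=> //; apply: child_gal_conj nlv rphi over over' Dth' good.
Qed.

Lemma good_leaf_gal_conj_eq u u' :
  good_leaf G N Af reps u -> in_LN G N Af reps u' ->
  gal_conj ('Ind[G] (tth u)) ('Ind[G] (tth u')) -> u = u'.
Proof.
move=> [leaf [p [pathp lastp good]]] [[p' [pathp' lastp']] leaf'] conj_root.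
have [_ head_p nlp edges] := pathp; have [_ head_p' _ edges'] := pathp'.
have prefix k : (k < size p)%N -> (k < size p')%N ->
    nth root p k = nth root p' k /\
    gal_conj ('Ind[tH (nth root p k)] (tth u)) ('Ind[tH (nth root p k)] (tth u')).
  elim: k => [|k IHk] lt_kp lt_kp'; first by rewrite !nth0 head_p head_p'.
  have [eq_k conj_k] := IHk (ltnW lt_kp) (ltnW lt_kp').
  have e' := edges' k lt_kp'; rewrite -eq_k in e'.
  apply: (edge_step (nlp k (ltnW lt_kp)) (edges k lt_kp) e' _ _ conj_k (good k.+1 lt_kp)).
    exact: leaf_Ind_irr_over pathp lastp leaf _ lt_kp.
  exact: leaf_Ind_irr_over pathp' lastp' leaf' _ lt_kp'.
rewrite -lastp -lastp'; apply: eq_last_leaf_paths pathp pathp' _ _ _.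
- by rewrite lastp.
- by rewrite lastp'.
by move=> k lt_kp lt_kp'; case: (prefix k lt_kp lt_kp').
Qed.

Lemma leaf_Ind_root_irr p u :
  is_path G N Af reps p -> last root p = u -> tA u = tH u -> 'Ind[G] (tth u) \in irr G.
Proof.
move=> pathp lastp leaf; have [p_gt0 head_p _ _] := pathp.
by have [] := leaf_Ind_irr_over pathp lastp leaf p_gt0; rewrite nth0 head_p.
Qed.

End CliffordTree.

Theorem lemma5 (gT : finGroupType) (G N : {group gT})
    (Af : triple gT -> {group gT})
    (reps : forall u : triple gT, pred 'CF(Af u))
    (u u' : triple gT) :
  class_C G -> (N <| G)%g ->
  A_spec G N Af -> reps_spec G N Af reps ->
  good_leaf G N Af reps u ->
  in_LN G N Af reps u' -> u' <> u ->
  ~ (exists e : gT -> algC,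
       realizes G (tH u) (cfker (tth u)) e /\
       realizes G (tH u') (cfker (tth u')) e).
Proof.
(* [class_C G] and [N <| G] serve to build the tree in the paper. *)
move=> _ _ hA hR good_u LN_u' neq_u [e [real_u real_u']].
have [[leaf [p [pathp lastp _]]] [[p' [pathp' lastp']] leaf']] := (good_u, LN_u').
have [[_ _ Lth _ _] [_ _ Lth' _ _]] :=
  (path_last_nlinear pathp, path_last_nlinear pathp').
rewrite lastp in Lth; rewrite lastp' in Lth'.
apply/neq_u/esym/(good_leaf_gal_conj_eq hA hR good_u LN_u').
rewrite -{1}leaf in real_u; rewrite -{1}leaf' in real_u'.
have irr_u := leaf_Ind_root_irr hA hR pathp lastp leaf.
have irr_u' := leaf_Ind_root_irr hA hR pathp' lastp' leaf'.
exact: (realizes_gal_conj Lth Lth' irr_u irr_u' real_u real_u').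
Qed.
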